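(* Let $A\in\mathbb{R}^{n\times n}$ with $A\ge 0$, $B\in\mathbb{R}^{n\times m}$, $C\in\mathbb{R}^{p\times n}$, and let $\mathcal{X}=\{(x,\overline{x},\underline{x}) : x,\overline{x},\underline{x}\in\mathbb{R}^n_+,\ \underline{x}\le x\le \overline{x}\}$. For gains $\overline{K},\underline{K}\in\mathbb{R}^{m\times n}$, $\overline{L},\underline{L}\in\mathbb{R}^{n\times p}$ let \[ M(\overline{K},\underline{K},\overline{L},\underline{L})=\begin{bmatrix} A & B\overline{K} & B\underline{K} \\ \overline{L}C & A-\overline{L}C+B\overline{K} & B\underline{K} \\ \underline{L}C & B\overline{K} & A-\underline{L}C+B\underline{K} \end{bmatrix}. \] If there exist gains $\overline{K},\underline{K},\overline{L},\underline{L}$ with $\underline{L}C\ge0$ such that $M(\overline{K},\underline{K},\overline{L},\underline{L})$ is Schur and $\mathcal{X}$ is invariant under $z(t+1)=M(\overline{K},\underline{K},\overline{L},\underline{L})z(t)$, then there also exist such gains with $\overline{K}=0$, i.e., gains $\underline{K}',\overline{L}',\underline{L}'$ with $\underline{L}'C\ge 0$ such that $M(0,\underline{K}',\overline{L}',\underline{L}')$ is Schur and $\mathcal{X}$ is invariant under $z(t+1)=M(0,\underline{K}',\overline{L}',\underline{L}')z(t)$.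
   Context: All inequalities between matrices or vectors are element-wise; $\mathbb{R}^n_+$ is the closed nonnegative orthant. A square matrix is Schur if its spectral radius is less than $1$. $M$ is the closed-loop matrix of $x(t+1)=Ax(t)+Bu(t)$, $y(t)=Cx(t)$ with upper/lower Luenberger observers $\overline{x}(t+1)=(A-\overline{L}C)\overline{x}(t)+\overline{L}y(t)+Bu(t)$, $\underline{x}(t+1)=(A-\underline{L}C)\underline{x}(t)+\underline{L}y(t)+Bu(t)$ and feedback $u=\underline{K}\,\underline{x}+\overline{K}\,\overline{x}$. Invariance of $\mathcal{X}$ means every trajectory starting in $\mathcal{X}$ stays in $\mathcal{X}$ for all $t\ge0$. *)

From HB Require Import structures.
From mathcomp Require Import all_boot all_order all_algebra.
From mathcomp Require Import reals.
From mathcomp.real_closed Require Import complex.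
Set Implicit Arguments. Unset Strict Implicit. Unset Printing Implicit Defensive.
Import Order.TTheory GRing.Theory Num.Theory.
Local Open Scope ring_scope.
Local Open Scope complex_scope.

Definition mx_le (R : realType) (m n : nat) (P Q : 'M[R]_(m, n)) : Prop :=
  forall i j, P i j <= Q i j.

(* Schur: spectral radius < 1, i.e. every (complex) eigenvalue, i.e. every
   complex root of the characteristic polynomial, has modulus < 1. *)
Definition is_schur (R : realType) (N : nat) (M : 'M[R]_N) : Prop :=
  forall z : R[i], root (map_poly (fun x : R => x%:C) (char_poly M)) z ->
    `|z| < 1.

(* Closed-loop matrix, state ordered as (x, xbar, xlow) *)
Definition closed_loop (R : realType) (n m p : nat)
  (A : 'M[R]_n) (B : 'M[R]_(n, m)) (C : 'M[R]_(p, n))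
  (Kb Kl : 'M[R]_(m, n)) (Lb Ll : 'M[R]_(n, p)) : 'M[R]_(n + n + n) :=
  block_mx
    (block_mx A (B *m Kb) (Lb *m C) (A - Lb *m C + B *m Kb))
    (col_mx (B *m Kl) (B *m Kl))
    (row_mx (Ll *m C) (B *m Kb))
    (A - Ll *m C + B *m Kl).

Definition inX (R : realType) (n : nat) (z : 'cV[R]_(n + n + n)) : Prop :=
  let x := usubmx (usubmx z) in
  let xb := dsubmx (usubmx z) in
  let xl := dsubmx z in
  [/\ mx_le 0 x, mx_le 0 xb, mx_le 0 xl, mx_le xl x & mx_le x xb].

Definition X_invariant (R : realType) (n : nat) (M : 'M[R]_(n + n + n)) : Prop :=
  forall z0, inX z0 -> forall t : nat, inX (iter t (mulmx M) z0).

From HB Require Import structures.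
From mathcomp Require Import all_boot all_order all_algebra.
From mathcomp Require Import reals.
From mathcomp Require Import ring lra.
Set Implicit Arguments. Unset Strict Implicit. Unset Printing Implicit Defensive.
Import Order.TTheory GRing.Theory Num.Theory.
Local Open Scope ring_scope.

(* In the coordinates (xlow, x - xlow, xbar - x) the set X becomes the
   nonnegative orthant and the closed loop becomes block upper triangular with
   diagonal blocks A + B (Kb + Kl), A - Ll C and A - Lb C.  Hence the spectrum
   depends on the state-feedback gains only through Kb + Kl, and invariance of
   X means that the transformed matrix is nonnegative.  Replacing (Kb, Kl) by
   (0, Kb + Kl) keeps the diagonal blocks and turns the off-diagonal blocks
   Ll C + B Kb and B Kb into Ll C >= 0 and 0. *)

Section NonnegativeMatrices.
Variable R : realType.

Lemma mx_le0_col k1 k2 l (P : 'M[R]_(k1, l)) (Q : 'M[R]_(k2, l)) :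
  mx_le 0 (col_mx P Q) <-> mx_le 0 P /\ mx_le 0 Q.
Proof.
split=> [PQ_ge0 | [P_ge0 Q_ge0] i j].
  by split=> i j; [have := PQ_ge0 (lshift k2 i) j | have := PQ_ge0 (rshift k1 i) j];
    rewrite ?col_mxEu ?col_mxEd !mxE.
rewrite !mxE; case: (split i) => k; [have := P_ge0 k j | have := Q_ge0 k j];
  by rewrite mxE.
Qed.

Lemma mx_le0_row k l1 l2 (P : 'M[R]_(k, l1)) (Q : 'M[R]_(k, l2)) :
  mx_le 0 (row_mx P Q) <-> mx_le 0 P /\ mx_le 0 Q.
Proof.
split=> [PQ_ge0 | [P_ge0 Q_ge0] i j].
  by split=> i j; [have := PQ_ge0 i (lshift l2 j) | have := PQ_ge0 i (rshift l1 j)];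
    rewrite ?row_mxEl ?row_mxEr !mxE.
rewrite !mxE; case: (split j) => r; [have := P_ge0 i r | have := Q_ge0 i r];
  by rewrite mxE.
Qed.

Lemma mx_le0_block k1 k2 l1 l2 (Pul : 'M[R]_(k1, l1)) (Pur : 'M[R]_(k1, l2))
    (Pdl : 'M[R]_(k2, l1)) (Pdr : 'M[R]_(k2, l2)) :
  mx_le 0 (block_mx Pul Pur Pdl Pdr) <->
  [/\ mx_le 0 Pul, mx_le 0 Pur, mx_le 0 Pdl & mx_le 0 Pdr].
Proof.
rewrite block_mxEv mx_le0_col !mx_le0_row.
by split=> [[[? ?] [? ?]] | [? ? ? ?]].
Qed.

Lemma mx_le0_mulP k l (P : 'M[R]_(k, l)) :
  mx_le 0 P <-> forall v : 'cV[R]_l, mx_le 0 v -> mx_le 0 (P *m v).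
Proof.
split=> [P_ge0 v v_ge0 i j | P_pos i j].
  rewrite !mxE; apply: sumr_ge0 => r _; apply: mulr_ge0.
  - by have := P_ge0 i r; rewrite mxE.
  - by have := v_ge0 r j; rewrite mxE.
have e_ge0 : mx_le 0 (delta_mx j 0 : 'cV[R]_l) by move=> r s; rewrite !mxE ler0n.
by have := P_pos _ e_ge0 i 0; rewrite -colE !mxE.
Qed.

End NonnegativeMatrices.

Lemma char_poly_ublock (R : comNzRingType) n1 n2 (P : 'M[R]_n1)
    (Q : 'M[R]_(n1, n2)) (S : 'M[R]_n2) :
  char_poly (block_mx P Q 0 S) = char_poly P * char_poly S.
Proof.
rewrite /char_poly /char_poly_mx map_block_mx map_mx0 (scalar_mx_block n1 n2).
by rewrite opp_block_mx add_block_mx oppr0 addr0 det_ublock.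
Qed.

Lemma char_poly_similar (F : fieldType) N (M U P : 'M[F]_N) :
  P *m M = U *m P -> P \in unitmx -> char_poly M = char_poly U.
Proof.
move=> PM_UP P_unit.
have : map_mx polyC P *m char_poly_mx M = char_poly_mx U *m map_mx polyC P.
  by rewrite /char_poly_mx mulmxBl mulmxBr -!map_mxM PM_UP scalar_mxC.
move/(congr1 determinant); rewrite !det_mulmx det_map_mx mulrC.
by apply: mulIf; rewrite polyC_eq0 -unitfE -unitmxE.
Qed.

Lemma is_schur_char_poly (R : realType) N (M M' : 'M[R]_N) :
  char_poly M' = char_poly M -> is_schur M -> is_schur M'.
Proof. by rewrite /is_schur => ->. Qed.

Lemma X_invariant_step (R : realType) n (M : 'M[R]_(n + n + n)) :
  X_invariant M <-> forall z, inX z -> inX (M *m z).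
Proof.
split=> [M_inv z z_in | M_step z z_in t]; first exact: (M_inv z z_in 1%N).
by elim: t => //= t IH; apply: M_step.
Qed.

Section ErrorCoordinates.
Variables (R : realType) (n m p : nat).
Variables (A : 'M[R]_n) (B : 'M[R]_(n, m)) (C : 'M[R]_(p, n)).

Definition errmx : 'M[R]_(n + n + n) :=
  block_mx (block_mx 0 0 1%:M 0) (col_mx 1%:M (- 1%:M)) (row_mx (- 1%:M) 1%:M) 0.

Definition inv_errmx : 'M[R]_(n + n + n) :=
  block_mx (block_mx 1%:M 1%:M 1%:M 1%:M) (col_mx 0 1%:M) (row_mx 1%:M 0) 0.

Definition closed_loop_err (Kb Kl : 'M[R]_(m, n)) (Lb Ll : 'M[R]_(n, p)) :
    'M[R]_(n + n + n) :=
  block_mx (block_mx (A + B *m (Kb + Kl)) (Ll *m C + B *m Kb) 0 (A - Ll *m C))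
    (col_mx (B *m Kb) 0) 0 (A - Lb *m C).

Lemma errmx_col k (x xb xl : 'M[R]_(n, k)) :
  errmx *m col_mx (col_mx x xb) xl = col_mx (col_mx xl (x - xl)) (xb - x).
Proof.
rewrite /errmx !mul_block_col mul_col_mx mul_row_col add_col_mx.
by rewrite !mul1mx !mul0mx !mulNmx !mul1mx !add0r !addr0 [- x + xb]addrC.
Qed.

Lemma inv_errmx_col k (a b c : 'M[R]_(n, k)) :
  inv_errmx *m col_mx (col_mx a b) c = col_mx (col_mx (a + b) (a + b + c)) a.
Proof.
rewrite /inv_errmx !mul_block_col mul_col_mx mul_row_col add_col_mx.
by rewrite !mul1mx !mul0mx !addr0.
Qed.

Lemma closed_loop_col Kb Kl Lb Ll k (x xb xl : 'M[R]_(n, k)) :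
  closed_loop A B C Kb Kl Lb Ll *m col_mx (col_mx x xb) xl =
  col_mx (col_mx (A *m x + B *m Kb *m xb + B *m Kl *m xl)
                 (Lb *m C *m x + (A - Lb *m C + B *m Kb) *m xb + B *m Kl *m xl))
         (Ll *m C *m x + B *m Kb *m xb + (A - Ll *m C + B *m Kl) *m xl).
Proof. by rewrite /closed_loop !mul_block_col mul_col_mx mul_row_col add_col_mx. Qed.

Lemma closed_loop_err_col Kb Kl Lb Ll k (a b c : 'M[R]_(n, k)) :
  closed_loop_err Kb Kl Lb Ll *m col_mx (col_mx a b) c =
  col_mx (col_mx ((A + B *m (Kb + Kl)) *m a + (Ll *m C + B *m Kb) *m b
                  + B *m Kb *m c)
                 ((A - Ll *m C) *m b))
         ((A - Lb *m C) *m c).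
Proof.
by rewrite /closed_loop_err !mul_block_col mul_col_mx add_col_mx !mul0mx !addr0 !add0r.
Qed.

Lemma inv_errmxK k (w : 'M[R]_(n + n + n, k)) : errmx *m (inv_errmx *m w) = w.
Proof.
rewrite -(vsubmxK w) -(vsubmxK (usubmx w)) inv_errmx_col errmx_col.
move: (usubmx _) (dsubmx (usubmx w)) (dsubmx w) => a b c.
by rewrite [a + b - a]addrC [a + b + c - _]addrC !addKr.
Qed.

Lemma errmx_unit : errmx \in unitmx.
Proof. by have /mulmx1_unit[] := inv_errmxK 1%:M; rewrite mulmx1. Qed.

Lemma errmx_closed_loop Kb Kl Lb Ll :
  errmx *m closed_loop A B C Kb Kl Lb Ll = closed_loop_err Kb Kl Lb Ll *m errmx.
Proof.
rewrite -[LHS]mulmx1 -[RHS]mulmx1 -!mulmxA -(vsubmxK 1%:M) -(vsubmxK (usubmx _)).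
rewrite closed_loop_col !errmx_col closed_loop_err_col.
rewrite !(mulmxDl, mulmxBl, mulmxDr, mulmxBr, mulmxN, mulNmx, mulmxA).
by congr col_mx; first congr col_mx; apply/matrixP => i j; rewrite !mxE; ring.
Qed.

Lemma char_poly_closed_loop Kb Kl Lb Ll :
  char_poly (closed_loop A B C Kb Kl Lb Ll) =
  char_poly (A + B *m (Kb + Kl)) * char_poly (A - Ll *m C) * char_poly (A - Lb *m C).
Proof.
rewrite (char_poly_similar (errmx_closed_loop _ _ _ _) errmx_unit).
by rewrite !char_poly_ublock.
Qed.

Lemma inX_errmx (z : 'cV[R]_(n + n + n)) : inX z <-> mx_le 0 (errmx *m z).
Proof.
rewrite -(vsubmxK z) -(vsubmxK (usubmx z)) errmx_col /inX !col_mxKu !col_mxKd.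
rewrite !mx_le0_col /mx_le; split.
  case=> _ _ xl_ge0 xl_le_x x_le_xb; split; first split; move=> i j;
    [have := xl_ge0 i j | have := xl_le_x i j | have := x_le_xb i j]; rewrite !mxE; lra.
case=> [[xl_ge0 e_ge0] eb_ge0]; split=> i j;
  have := xl_ge0 i j; have := e_ge0 i j; have := eb_ge0 i j; rewrite !mxE; lra.
Qed.

Lemma X_invariant_closed_loop Kb Kl Lb Ll :
  X_invariant (closed_loop A B C Kb Kl Lb Ll) <-> mx_le 0 (closed_loop_err Kb Kl Lb Ll).
Proof.
rewrite X_invariant_step mx_le0_mulP; split=> [CL_step w | U_pos z].
  by have := CL_step (inv_errmx *m w);
    rewrite !inX_errmx inv_errmxK mulmxA errmx_closed_loop -mulmxA inv_errmxK.
by rewrite !inX_errmx mulmxA errmx_closed_loop -mulmxA; apply: U_pos.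
Qed.

Lemma mx_le0_closed_loop_err Kb Kl Lb Ll :
  mx_le 0 (closed_loop_err Kb Kl Lb Ll) <->
  [/\ mx_le 0 (A + B *m (Kb + Kl)), mx_le 0 (Ll *m C + B *m Kb), mx_le 0 (B *m Kb),
      mx_le 0 (A - Ll *m C) & mx_le 0 (A - Lb *m C)].
Proof.
have zero_ge0 k l : mx_le 0 (0 : 'M[R]_(k, l)) by [].
rewrite /closed_loop_err mx_le0_block; split.
  by case=> /mx_le0_block[? ? _ ?] /mx_le0_col[? _] _ ?.
case=> ? ? ? ? ?; split=> //; first by apply/mx_le0_block.
by apply/mx_le0_col.
Qed.

End ErrorCoordinates.

Theorem corollary1 (R : realType) (n m p : nat)
  (A : 'M[R]_n) (B : 'M[R]_(n, m)) (C : 'M[R]_(p, n)) :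
  mx_le 0 A ->
  (exists (Kb Kl : 'M[R]_(m, n)) (Lb Ll : 'M[R]_(n, p)),
      [/\ mx_le 0 (Ll *m C), is_schur (closed_loop A B C Kb Kl Lb Ll)
        & X_invariant (closed_loop A B C Kb Kl Lb Ll)]) ->
  exists (Kl' : 'M[R]_(m, n)) (Lb' Ll' : 'M[R]_(n, p)),
    [/\ mx_le 0 (Ll' *m C), is_schur (closed_loop A B C 0 Kl' Lb' Ll')
      & X_invariant (closed_loop A B C 0 Kl' Lb' Ll')].
Proof.
move=> _ [Kb [Kl [Lb [Ll [LlC_ge0 CL_schur CL_inv]]]]].
exists (Kb + Kl), Lb, Ll; split=> //.
  by apply: is_schur_char_poly CL_schur; rewrite !char_poly_closed_loop add0r.
move: CL_inv; rewrite !X_invariant_closed_loop !mx_le0_closed_loop_err.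
by rewrite add0r mulmx0 addr0; case=> ? _ _ ? ?; split.
Qed.
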